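(* Let $S$ be a finite set of points in $\mathbb{R}^D$, let $t\geqslant 1$ be a real number, let $G$ be a $t$-spanner for $S$, and let $T$ be a minimum spanning tree of $G$. Let $p$ and $q$ be two points of $S$. Then every edge on the path in $T$ between $p$ and $q$ has length at most $t\cdot d(p,q)$.
   Context: $d(u,v)$ denotes Euclidean distance. For a graph $G$ with vertex set $S\subset\mathbb{R}^D$, each edge $(u,v)$ has weight (length) $d(u,v)$ and $d_G(u,v)$ is the length of a shortest path in $G$ between $u$ and $v$. $G$ is a $t$-spanner for $S$ if its vertex set is $S$ and $d_G(u,v)\leqslant t\cdot d(u,v)$ for all $u,v\in S$. A minimum spanning tree of $G$ is a spanning tree of $G$ (using only edges of $G$) of minimum total edge weight. *)

From HB Require Import structures.
From mathcomp Require Import all_boot all_order all_algebra.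
From mathcomp Require Import reals.
Set Implicit Arguments. Unset Strict Implicit. Unset Printing Implicit Defensive.
Import Order.TTheory GRing.Theory Num.Theory.
Local Open Scope ring_scope.

Definition edist (R : realType) (D : nat) (x y : 'rV[R]_D) : R :=
  Num.sqrt (\sum_(i < D) (x ord0 i - y ord0 i) ^+ 2).

(* The point set S is the image of an injective map pos : V -> R^D, V a finType.
   Graphs on S are relations on V; edge (u,v) has weight edist (pos u) (pos v). *)

Definition walk_len (R : realType) (D : nat) (V : finType) (pos : V -> 'rV[R]_D)
    (u : V) (s : seq V) : R :=
  \sum_(e <- zip (u :: s) s) edist (pos e.1) (pos e.2).

Definition simple_graph (V : finType) (G : rel V) : Prop :=
  symmetric G /\ irreflexive G.

(* G is a t-spanner: d_G(u,v) <= t * d(u,v), i.e. some walk in G from u to v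
   has length at most t * d(u,v) (d_G is the minimum over such walks, which
   exists since simple paths are finitely many; d_G = +oo if none). *)
Definition t_spanner (R : realType) (D : nat) (V : finType) (pos : V -> 'rV[R]_D)
    (t : R) (G : rel V) : Prop :=
  forall u v : V, exists s : seq V,
    [/\ path G u s, last u s = v & walk_len pos u s <= t * edist (pos u) (pos v)].

(* total weight of a graph: each undirected edge counted once *)
Definition graph_weight (R : realType) (D : nat) (V : finType) (pos : V -> 'rV[R]_D)
    (H : rel V) : R :=
  (\sum_(u : V) \sum_(v : V | H u v) edist (pos u) (pos v)) / 2.

Definition acyclic (V : finType) (H : rel V) : Prop :=
  forall c : seq V, uniq c -> (3 <= size c)%N -> ~~ cycle H c.

Definition spanning_tree_of (V : finType) (G H : rel V) : Prop :=
  [/\ symmetric H, subrel H G, (forall u v, connect H u v) & acyclic H].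

Definition minimum_spanning_tree_of (R : realType) (D : nat) (V : finType)
    (pos : V -> 'rV[R]_D) (G H : rel V) : Prop :=
  spanning_tree_of G H /\
  forall H' : rel V, spanning_tree_of G H' -> graph_weight pos H <= graph_weight pos H'.

From HB Require Import structures.
From mathcomp Require Import all_boot all_order all_algebra.
From mathcomp Require Import reals lra.
Import Order.TTheory GRing.Theory Num.Theory.
Set Implicit Arguments. Unset Strict Implicit. Unset Printing Implicit Defensive.
Local Open Scope ring_scope.

(* Exchange argument.  If an edge xy of the tree path from p to q were longer
   than t d(p,q), deleting it would split T into two components, p on the
   side of x and q on the side of y.  The spanner walk from p to q, of length
   at most t d(p,q), must leave the component of p through some edge ab of G,
   and ab is then strictly shorter than xy.  Replacing xy by ab yields a
   spanning tree of G lighter than T, contradicting minimality. *)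

Lemma mem_zip_cons_split (T : eqType) (u x y : T) (s : seq T) :
  (x, y) \in zip (u :: s) s -> exists s1 s2, s = s1 ++ y :: s2 /\ last u s1 = x.
Proof.
elim: s u => [|z s IH] u //=.
rewrite in_cons => /orP [/eqP [-> ->]|/IH [s1 [s2 [-> <-]]]].
  by exists [::], s.
by exists (z :: s1), s2.
Qed.

Section EdgeSurgery.

Variable V : finType.
Implicit Types (H T : rel V) (a b x y u v : V) (s : seq V).

Definition uedge x y : rel V :=
  fun u v => (u == x) && (v == y) || (u == y) && (v == x).

Definition del_edge T x y : rel V := fun u v => T u v && ~~ uedge x y u v.

Definition add_edge H a b : rel V := fun u v => H u v || uedge a b u v.

Lemma uedge_sym x y : symmetric (uedge x y).
Proof. by move=> u v; rewrite /uedge orbC andbC [(v == y) && _]andbC. Qed.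

Lemma del_edge_sym T x y : symmetric T -> symmetric (del_edge T x y).
Proof. by move=> Tsym u v; rewrite /del_edge Tsym uedge_sym. Qed.

Lemma add_edge_sym H a b : symmetric H -> symmetric (add_edge H a b).
Proof. by move=> Hsym u v; rewrite /add_edge Hsym uedge_sym. Qed.

Lemma sub_del_edge T x y : subrel (del_edge T x y) T.
Proof. by move=> u v /andP []. Qed.

Lemma del_edgeK T x y :
  symmetric T -> T x y -> add_edge (del_edge T x y) x y =2 T.
Proof.
move=> Tsym Txy u v; rewrite /add_edge /del_edge.
case xy_uv: (uedge x y u v); rewrite ?orbT ?andbT ?orbF //.
by case/orP: xy_uv => /andP [/eqP -> /eqP ->]; rewrite // Tsym.
Qed.

Lemma path_del_edge T x y u s :
  (x \notin u :: s) || (y \notin u :: s) -> path T u s -> path (del_edge T x y) u s.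
Proof.
move=> xyNs; apply: (@sub_in_path _ (mem (u :: s))); last exact/allP.
move=> v w vs ws Tvw; rewrite /del_edge Tvw /=; apply: contraL xyNs.
by rewrite negb_or !negbK; case/orP=> /andP [/eqP <- /eqP <-]; rewrite vs ws.
Qed.

Lemma simple_path_del_edge T u s x y :
  path T u s -> uniq (u :: s) -> (x, y) \in zip (u :: s) s ->
  [/\ T x y, connect (del_edge T x y) u x & connect (del_edge T x y) y (last u s)].
Proof.
move=> + + /mem_zip_cons_split [s1 [s2 [s_def <-]]]; rewrite s_def.
rewrite -cat_cons cat_uniq cat_path last_cat => /andP [Ts1 /andP [Ty Ts2]].
case/and3P=> _ /hasPn s1_s2 _.
have s1Ny : y \notin u :: s1 := s1_s2 y (mem_head _ _).
have s2Nx : last u s1 \notin y :: s2 := contraL (s1_s2 _) (mem_last u s1).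
split=> //; apply/connectP.
  by exists s1 => //; apply: path_del_edge Ts1; rewrite s1Ny orbT.
by exists s2 => //; apply: path_del_edge Ts2; rewrite s2Nx.
Qed.

Lemma acyclic_subrel H H' : subrel H' H -> acyclic H -> acyclic H'.
Proof.
move=> H'H Hacy c uc c_ge3; apply: contra (Hacy c uc c_ge3); exact: sub_cycle.
Qed.

Lemma acyclic_closed_path_size H u s :
  acyclic H -> path H u s -> uniq (u :: s) -> H (last u s) u -> (size s <= 1)%N.
Proof.
move=> Hacy Hus us Hsu; rewrite leqNgt; apply/negP => s_gt1.
by have := Hacy (u :: s) us s_gt1; rewrite /= rcons_path Hus Hsu.
Qed.

Lemma del_edge_disconnect T x y :
  acyclic T -> T x y -> x != y -> ~~ connect (del_edge T x y) y x.
Proof.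
move=> Tacy Txy xNy; apply/negP => /connectP [s0 ps0 x_last].
case: (shortenP ps0) x_last => s ps us _ x_last.
have := acyclic_closed_path_size Tacy (sub_path (@sub_del_edge T x y) ps) us.
rewrite -x_last => /(_ Txy).
case: s ps {us} x_last => [|z [|]] //= ps x_last _; first by rewrite x_last eqxx in xNy.
by move: ps; rewrite -x_last /del_edge /uedge !eqxx orbT andbF.
Qed.

Lemma acyclic_add_edge H a b :
  symmetric H -> acyclic H -> ~~ connect H a b -> acyclic (add_edge H a b).
Proof.
move=> Hsym Hacy aNb c uc c_ge3; apply/negP => cyc.
have bNa : b != a by apply: contraNneq aNb => ->.
have H_off_b : {in predC1 b &, subrel (add_edge H a b) H}.
  move=> u v; rewrite !inE => uNb vNb /orP [// | /orP [] /andP [/eqP ua /eqP vb]].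
    by rewrite vb eqxx in vNb.
  by rewrite ua eqxx in uNb.
have [b_c | bNc] := boolP (b \in c); last first.
  have := Hacy c uc c_ge3; rewrite (sub_in_cycle H_off_b _ cyc) //.
  by apply/allP => v v_c; apply: contraNneq bNc => <-.
have [i r c_rot] := rot_to b_c.
move: cyc uc c_ge3; rewrite -(rot_cycle i) -(rot_uniq i) -(size_rot i) c_rot.
case: r {c_rot} => [|z r] //= /andP [Hbz]; rewrite rcons_path => /andP [Hzr Hrb].
rewrite !ltnS => uc r_gt0; have /andP [bNzr /andP [zNr _]] := uc.
have {}Hzr : path H z r.
  by apply: (sub_in_path H_off_b) Hzr; apply/allP => v; apply: contraTneq => ->.
have edge_b w : add_edge H a b b w = H b w || (w == a).
  by rewrite /add_edge /uedge eqxx (negbTE bNa).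
move: Hbz Hrb; rewrite [add_edge H a b (last z r) b]add_edge_sym // !edge_b.
case/orP=> [Hbz | /eqP za] /orP [Hbr | /eqP ra].
- have bzr : path H b (z :: r) by rewrite /= Hbz.
  have := acyclic_closed_path_size Hacy bzr uc; rewrite Hsym => /(_ Hbr).
  by rewrite /= ltnNge r_gt0.
- case/negP: aNb; rewrite (sym_connect_sym Hsym); apply/connectP.
  by exists (z :: r); rewrite /= ?Hbz ?ra.
- case/negP: aNb; apply/connectP.
  by exists (rcons r b); rewrite ?last_rcons // rcons_path -za Hzr Hsym.
- clear -za ra zNr r_gt0; case: r zNr ra r_gt0 => // w r zNr ra _.
  by move: (mem_last w r); rewrite /= in ra; rewrite ra -za (negbTE zNr).
Qed.

Lemma del_edge_connect_either T x y :
  symmetric T -> (forall u v, connect T u v) ->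
  forall u, connect (del_edge T x y) x u || connect (del_edge T x y) y u.
Proof.
move=> Tsym Tconn u.
pose P := [pred w | connect (del_edge T x y) x w || connect (del_edge T x y) y w].
have P_closed : closed T P.
  apply: (intro_closed (sym_connect_sym Tsym)) => v w Tvw; rewrite !inE.
  case xy_vw: (uedge x y v w).
    by case/orP: xy_vw => /andP [_ /eqP ->]; rewrite connect0 ?orbT.
  have T0vw : del_edge T x y v w by rewrite /del_edge Tvw xy_vw.
  by case/orP=> /connect_trans/(_ (connect1 T0vw)) ->; rewrite ?orbT.
by rewrite -[_ || _]/(u \in P) -(closed_connect P_closed (Tconn x u)) inE connect0.
Qed.

Lemma add_edge_connect H a b :
  symmetric H -> (forall u, connect H a u || connect H b u) ->
  forall u v, connect (add_edge H a b) u v.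
Proof.
move=> Hsym cover.
have lift : subrel (connect H) (connect (add_edge H a b)).
  by apply: connect_sub => u v Huv; rewrite connect1 // /add_edge Huv.
have ab : add_edge H a b a b by rewrite /add_edge /uedge !eqxx orbT.
have from_a u : connect (add_edge H a b) a u.
  by case/orP: (cover u) => /lift //; apply: connect_trans (connect1 ab).
move=> u v; apply: connect_trans (from_a v).
by rewrite (sym_connect_sym (add_edge_sym a b Hsym)).
Qed.

Lemma exchange_spanning_tree G T x y a b :
  symmetric G -> spanning_tree_of G T -> G a b ->
  connect (del_edge T x y) x a -> ~~ connect (del_edge T x y) x b ->
  spanning_tree_of G (add_edge (del_edge T x y) a b).
Proof.
move=> Gsym [Tsym TG Tconn Tacy] Gab xa xNb.
have T0sym := del_edge_sym x y Tsym.
have connect_symT0 := sym_connect_sym T0sym.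
have cover := del_edge_connect_either x y Tsym Tconn.
split.
- exact: add_edge_sym T0sym.
- move=> u v /orP [/sub_del_edge/TG // | /orP [] /andP [/eqP -> /eqP ->]] //.
  by rewrite Gsym.
- apply: add_edge_connect T0sym _ => u.
  have yb : connect (del_edge T x y) y b by move: (cover b); rewrite (negbTE xNb).
  case/orP: (cover u) => [xu | yu].
    by rewrite (@connect_trans _ _ x a u) // connect_symT0.
  by rewrite (@connect_trans _ _ y b u) ?orbT // connect_symT0.
- apply: acyclic_add_edge => //; first exact: acyclic_subrel (@sub_del_edge T x y) Tacy.
  by apply: contra xNb; apply: connect_trans.
Qed.

End EdgeSurgery.

Lemma edistC (R : realType) (D : nat) (x y : 'rV[R]_D) : edist x y = edist y x.
Proof.
by rewrite /edist; congr Num.sqrt; apply: eq_bigr => i _; rewrite -sqrrN opprB.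
Qed.

Lemma edist_ge0 (R : realType) (D : nat) (x y : 'rV[R]_D) : 0 <= edist x y.
Proof. exact: sqrtr_ge0. Qed.

Section Weights.

Variables (R : realType) (D : nat) (V : finType) (pos : V -> 'rV[R]_D).
Implicit Types (G H T : rel V) (a b x y u v : V) (s : seq V).

Lemma walk_len_cons u z s :
  walk_len pos u (z :: s) = edist (pos u) (pos z) + walk_len pos z s.
Proof. by rewrite /walk_len /= big_cons. Qed.

Lemma walk_len_ge0 u s : 0 <= walk_len pos u s.
Proof. by apply: sumr_ge0 => e _; exact: edist_ge0. Qed.

Lemma path_exit_edge G (C : pred V) u s :
  path G u s -> C u -> ~~ C (last u s) ->
  exists a b, [/\ G a b, C a, ~~ C b & edist (pos a) (pos b) <= walk_len pos u s].
Proof.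
elim: s u => [|z s IH] u /=; first by move=> _ ->.
move=> /andP [Guz Gzs] Cu Cs; rewrite walk_len_cons.
have [Cz | Nz] := boolP (C z).
  have [a [b [Gab Ca Nb ab_le]]] := IH z Gzs Cz Cs.
  by exists a, b; split=> //; rewrite ler_wpDl // edist_ge0.
by exists u, z; split=> //; rewrite lerDl walk_len_ge0.
Qed.

Lemma eq_graph_weight H H' : H =2 H' -> graph_weight pos H = graph_weight pos H'.
Proof.
by move=> eqH; rewrite /graph_weight; congr (_ / _); apply: eq_bigr => u _;
  apply: eq_bigl => v; rewrite eqH.
Qed.

Lemma graph_weight_add_edge H a b :
  symmetric H -> ~~ H a b -> a != b ->
  graph_weight pos (add_edge H a b) = graph_weight pos H + edist (pos a) (pos b).
Proof.
move=> Hsym Hab aNb.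
have NH_ab u v : uedge a b u v -> ~~ H u v.
  by case/orP=> /andP [/eqP -> /eqP ->]; rewrite // Hsym.
have split_ab u : \sum_(v | add_edge H a b u v) edist (pos u) (pos v) =
    \sum_(v | H u v) edist (pos u) (pos v) +
    \sum_(v | uedge a b u v) edist (pos u) (pos v).
  rewrite (bigID (uedge a b u)) /= addrC; congr (_ + _); apply: eq_bigl => v;
    rewrite /add_edge; case ab_uv: (uedge a b u v); rewrite ?andbT ?andbF ?orbT ?orbF //.
  by rewrite (negbTE (NH_ab _ _ ab_uv)).
have sum_ab : \sum_u \sum_(v | uedge a b u v) edist (pos u) (pos v) =
    edist (pos a) (pos b) + edist (pos a) (pos b).
  rewrite pair_big_dep (eq_bigl (mem [:: (a, b); (b, a)])) => [|[u v]]; last first.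
    by rewrite !inE /uedge !xpair_eqE.
  rewrite -big_uniq; last by rewrite /= andbT inE xpair_eqE negb_and aNb.
  by rewrite !big_cons big_nil /= addr0 (edistC (pos b)).
rewrite /graph_weight (eq_bigr _ (fun u _ => split_ab u)) big_split /= sum_ab.
lra.
Qed.

Lemma graph_weight_exchange T x y a b :
  symmetric T -> T x y -> x != y -> ~~ connect (del_edge T x y) a b ->
  graph_weight pos (add_edge (del_edge T x y) a b) + edist (pos x) (pos y) =
  graph_weight pos T + edist (pos a) (pos b).
Proof.
move=> Tsym Txy xNy aNb.
have T0sym := del_edge_sym x y Tsym.
have T0Nab : ~~ del_edge T x y a b by apply: contra aNb => /connect1.
have aNeqb : a != b by apply: contraNneq aNb => ->.
have T0Nxy : ~~ del_edge T x y x y by rewrite /del_edge /uedge !eqxx andbF.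
by rewrite -(eq_graph_weight (del_edgeK Tsym Txy)) !graph_weight_add_edge // addrAC.
Qed.

End Weights.

Theorem lemma4 (R : realType) (D : nat) (V : finType) (pos : V -> 'rV[R]_D)
    (t : R) (G T : rel V) (p q : V) :
  injective pos -> 1 <= t ->
  simple_graph G -> t_spanner pos t G ->
  minimum_spanning_tree_of pos G T ->
  forall s : seq V, path T p s -> last p s = q -> uniq (p :: s) ->
  forall x y : V, (x, y) \in zip (p :: s) s ->
    edist (pos x) (pos y) <= t * edist (pos p) (pos q).
Proof.
move=> _ _ [Gsym Girr] spanner [Tst Tmin] s ps <- us x y xy.
have [Tsym TG _ Tacy] := Tst.
have [Txy px yq] := simple_path_del_edge ps us xy.
have xNy : x != y by apply: contraTneq Txy => ->; apply/negP => /TG; rewrite Girr.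
set T0 := del_edge T x y in px yq *.
have symT0 := sym_connect_sym (del_edge_sym x y Tsym).
have pNq : ~~ connect T0 p (last p s).
  apply: contra (del_edge_disconnect Tacy Txy xNy) => pq.
  by apply: (connect_trans yq); apply: (connect_trans _ px); rewrite symT0.
rewrite leNgt; apply/negP => short.
have [w [pw wq w_le]] := spanner p (last p s).
rewrite -wq in pNq.
have [a [b [Gab pa pNb ab_le]]] := path_exit_edge pos pw (connect0 T0 p) pNq.
have xa : connect T0 x a by apply: connect_trans pa; rewrite symT0.
have xNb : ~~ connect T0 x b by apply: contra pNb; apply: connect_trans px.
have aNb : ~~ connect T0 a b by apply: contra xNb; apply: connect_trans xa.
have := Tmin _ (exchange_spanning_tree Gsym Tst Gab xa xNb).
have := graph_weight_exchange pos Tsym Txy xNy aNb.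
have : edist (pos a) (pos b) < edist (pos x) (pos y).
  exact: le_lt_trans ab_le (le_lt_trans w_le short).
lra.
Qed.
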